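(* Let $r\ge 2$ be an integer. There is a constant $c_r>0$ depending only on $r$ such that the following holds. Let $G=(V,E)$ be a graph with $|V|=n$, where $n$ is sufficiently large (depending on $r$), and let $T\subseteq E^r$ be a set of $r$-tuples of edges. Then $V$ can be partitioned into disjoint sets $V_1,\ldots,V_r$, each of size $\lceil n/r\rceil$ or $\lfloor n/r \rfloor$, such that at least $c_r|T|$ of the tuples in $T$ consist only of edges each of which has both of its endpoints in the same part $V_j$ (different edges of a tuple may lie in different parts). *)

From mathcomp Require Import all_boot all_order all_algebra.
Set Implicit Arguments. Unset Strict Implicit. Unset Printing Implicit Defensive.

Definition simple_edges (V : finType) (E : {set {set V}}) : Prop :=
  forall e, e \in E -> #|e| = 2.

(* A map f : V -> 'I_r encodes the partition V_j = f^{-1}(j), j < r.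
   It is balanced if every part has size floor(n/r) or ceil(n/r). *)
Definition balanced_partition (V : finType) (r : nat) (f : V -> 'I_r) : Prop :=
  forall j : 'I_r,
    #|[set v | f v == j]| = #|V| %/ r \/
    #|[set v | f v == j]| = (#|V| + r.-1) %/ r.

Definition edge_inside (V : finType) (r : nat) (f : V -> 'I_r) (e : {set V}) : bool :=
  [forall x in e, forall y in e, f x == f y].

Definition good_tuple (V : finType) (r : nat) (f : V -> 'I_r)
    (t : {ffun 'I_r -> {set V}}) : bool :=
  [forall i, edge_inside f (t i)].

From mathcomp Require Import all_boot all_order all_algebra.
Import Order.TTheory GRing.Theory Num.Theory.
From mathcomp Require Import zify.
Set Implicit Arguments. Unset Strict Implicit. Unset Printing Implicit Defensive.

(* A tuple of r edges spans at most 2r vertices. For a uniformly random set A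
   of m = ceil(n/r) vertices, a fixed set of k <= 2r vertices lies in A with
   probability C(n-k, m-k) / C(n, m) >= ((m-k)/n)^k >= (2r)^(-2r) as soon as
   n >= 4r^2, so by averaging some A contains the vertex sets of at least a
   (2r)^(-2r) fraction of the tuples. Taking A as one part and splitting its
   complement evenly into the r-1 other parts gives a balanced partition in
   which all these tuples are good. *)

Lemma leq_card_bigcup (I T : finType) (P : pred I) (F : I -> {set T}) :
  #|\bigcup_(i | P i) F i| <= \sum_(i | P i) #|F i|.
Proof.
elim/big_rec2: _ => [|i n U _ leUn]; first by rewrite cards0.
by apply: leq_trans (leq_card_setU _ _) _; rewrite leq_add2l.
Qed.

Lemma card_set_in_sum (X : finType) (B : {set X}) (P : pred X) :
  #|[set x in B | P x]| = \sum_(x in B) P x.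
Proof.
rewrite -sum1_card (eq_bigl (fun x => (x \in B) && P x)) => [|x]; last first.
  by rewrite !inE.
by rewrite big_mkcondr; apply: eq_bigr => x _; case: (P x).
Qed.

Lemma averaging_incidence (I J : finType) (T : {set I}) (F : {set J})
    (R : I -> J -> bool) D :
  0 < #|F| -> (forall t, t \in T -> #|F| <= #|[set A in F | R t A]| * D) ->
  exists2 A, A \in F & #|T| <= #|[set t in T | R t A]| * D.
Proof.
move=> F_gt0 richT; have [A0 A0F] : exists A0, A0 \in F.
  by apply/set0Pn; rewrite -card_gt0.
pose deg A := #|[set t in T | R t A]|.
case: (arg_maxnP deg A0F) => A AF degA_max; exists A => //.
have double_count : \sum_(t in T) #|[set A in F | R t A]| = \sum_(A in F) deg A.
  under eq_bigr do rewrite card_set_in_sum.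
  by rewrite exchange_big; apply: eq_bigr => B _; rewrite /deg card_set_in_sum.
rewrite -(leq_pmul2r F_gt0) -sum_nat_const.
apply: (@leq_trans ((\sum_(t in T) #|[set A in F | R t A]|) * D)).
  by rewrite big_distrl; apply: leq_sum.
rewrite double_count mulnAC leq_mul2r mulnC -sum_nat_const; apply/orP; right.
by apply: leq_sum => B; apply: degA_max.
Qed.

Lemma leq_bin_ratio n m k : k <= m -> m <= n ->
  'C(n, m) * (m - k) ^ k <= 'C(n - k, m - k) * n ^ k.
Proof.
elim: k => [|k IHk] km mn; first by rewrite !subn0.
have binE : 'C(n - k, m - k) * (m - k) = (n - k) * 'C(n - k.+1, m - k.+1).
  by rewrite !subnS mulnC mul_bin_diag prednK ?subn_gt0.
apply: (@leq_trans ('C(n, m) * (m - k) ^ k.+1)).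
  by rewrite leq_mul2l leq_exp2r // leq_sub2l ?orbT.
apply: (@leq_trans ('C(n - k, m - k) * n ^ k * (m - k))).
  by rewrite expnSr mulnA leq_mul2r IHk ?orbT // ltnW.
rewrite mulnAC binE expnSr -mulnA mulnCA leq_mul2l (mulnC (n ^ k)) leq_mul2r.
by rewrite leq_subr !orbT.
Qed.

Lemma card_draws_superset (V : finType) (S : {set V}) m : #|S| <= m ->
  #|[set A : {set V} | (#|A| == m) && (S \subset A)]| =
    'C(#|V| - #|S|, m - #|S|).
Proof.
move=> Sm; have -> : #|V| - #|S| = #|~: S| by rewrite [RHS]cardsCs setCK.
have -> : [set A : {set V} | (#|A| == m) && (S \subset A)] =
          [set X :|: S | X in [set X : {set V} | X \subset ~: S
                                                 & #|X| == m - #|S|]].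
  apply/setP => A; rewrite inE; apply/andP/imsetP.
    case=> /eqP cardA SA; exists (A :\: S).
      by rewrite inE {1}setDE subsetIr cardsD (setIidPr SA) cardA /=.
    by rewrite -{1}(setID A S) (setIidPr SA) setUC.
  case=> X; rewrite inE => /andP[XS /eqP cardX] ->; split; last exact: subsetUr.
  rewrite cardsU disjoint_setI0 ?cards0 ?subn0 ?cardX ?subnK //.
  by rewrite disjoints_subset.
have unionK (X : {set V}) : X \subset ~: S -> (X :|: S) :\: S = X.
  move=> XS; rewrite setDUl setDv setU0.
  by apply/setDidPl; rewrite disjoints_subset.
rewrite card_in_imset ?cards_draws // => X Y.
rewrite !inE => /andP[XS _] /andP[YS _] XYS.
by rewrite -(unionK X XS) XYS unionK.
Qed.

Lemma card_draws_leq_superset (V : finType) (S : {set V}) m c :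
  #|S| < m -> #|V| <= c * (m - #|S|) ->
  'C(#|V|, m) <= #|[set A : {set V} | (#|A| == m) && (S \subset A)]| * c ^ #|S|.
Proof.
move=> Sm Vm; have [mV | Vm'] := leqP m #|V|; last by rewrite bin_small.
rewrite card_draws_superset; last exact: ltnW.
have powS_gt0 : 0 < (m - #|S|) ^ #|S| by rewrite expn_gt0 subn_gt0 Sm.
have powS_le : #|V| ^ #|S| <= (c * (m - #|S|)) ^ #|S|.
  by case: (posnP #|S|) => [-> | S_gt0]; rewrite ?expn0 ?leq_exp2r.
rewrite -(leq_pmul2r powS_gt0); apply: leq_trans (leq_bin_ratio (ltnW Sm) mV) _.
by rewrite -mulnA leq_mul2l -expnMn powS_le orbT.
Qed.

Lemma count_modn_iota d j K : j < d ->
  count (fun i => i %% d == j) (iota 0 K) = K %/ d + (j < K %% d).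
Proof.
move=> jd; have d_gt0 : 0 < d by apply: leq_ltn_trans jd.
elim: K => [|K IHK]; first by rewrite div0n mod0n.
rewrite -addn1 iotaD count_cat IHK /= add0n addn0 addn1 divnS // modnS.
have := ltn_pmod K d_gt0; case: ifP => [dvd_dK1 | _] ltKd.
  have -> : K %% d = d.-1.
    have := divn_eq K d; move: (dvd_dK1); rewrite dvdn_eq divnS // dvd_dK1 /=.
    move=> /eqP; move: ltKd; move: (K %/ d) (K %% d) => q p; lia.
  have -> : j < d.-1 = (j != d.-1).
    by rewrite ltn_neqAle -ltnS prednK // jd andbT.
  by rewrite ltn0 addn0 eq_sym -addnA addn_negb addnC.
by rewrite /= add0n -addnA ltnS; congr (_ + _); case: ltngtP.
Qed.

Lemma card_ord_modn d j K : j < d ->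
  #|[set i : 'I_K | i %% d == j]| = K %/ d + (j < K %% d).
Proof.
move=> jd; rewrite cardE /enum_mem -enumT size_filter.
rewrite -count_modn_iota // -val_enum_ord count_map.
by apply: eq_count => i; rewrite /= inE.
Qed.

Lemma exists_equipartition (X : finType) d : 0 < d ->
  exists g : X -> 'I_d,
    forall j : 'I_d, #|[set x | g x == j]| = #|X| %/ d + (j < #|X| %% d).
Proof.
move=> d_gt0; pose g (x : X) : 'I_d := Ordinal (ltn_pmod (enum_rank x) d_gt0).
exists g => j; rewrite -card_ord_modn //.
have -> : [set x | g x == j] = enum_val @: [set i : 'I_#|X| | i %% d == j].
  rewrite (can2_imset_pre _ enum_valK enum_rankK).
  by apply/setP => x; rewrite !inE.
by rewrite card_imset //; apply: enum_val_inj.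
Qed.

Lemma equipartition_rest_sizes n d j : j < d ->
  let K := n - (n + d) %/ d.+1 in
  K %/ d + (j < K %% d) = n %/ d.+1 \/ K %/ d + (j < K %% d) = (n + d) %/ d.+1.
Proof.
move=> jd /=; have d_gt0 : 0 < d by apply: leq_ltn_trans jd.
have := divn_eq n d.+1; have := ltn_pmod n (ltn0Sn d).
move: (n %/ d.+1) (n %% d.+1) => q [|p] ltpd ->.
  have -> : (q * d.+1 + 0 + d) %/ d.+1 = q.
    by rewrite addn0 (divnMDl q d (ltn0Sn d)) divn_small ?addn0.
  have -> : q * d.+1 + 0 - q = q * d + 0 by lia.
  by rewrite (divnMDl q 0 d_gt0) modnMDl div0n mod0n ltn0 !addn0; left.
have -> : (q * d.+1 + p.+1 + d) %/ d.+1 = q.+1.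
  have -> : q * d.+1 + p.+1 + d = q.+1 * d.+1 + p by lia.
  by rewrite (divnMDl q.+1 p (ltn0Sn d)) divn_small ?addn0 // ltnW.
have -> : q * d.+1 + p.+1 - q.+1 = q * d + p by lia.
rewrite (divnMDl q p d_gt0) modnMDl divn_small // modn_small // addn0.
by case: (j < p); [right; rewrite addn1 | left; rewrite addn0].
Qed.

Lemma balanced_partition_with_part (V : finType) d (A : {set V}) : 0 < d ->
  #|A| = (#|V| + d) %/ d.+1 ->
  exists2 f : V -> 'I_d.+1, balanced_partition f & {in A, forall v, f v = ord0}.
Proof.
move=> d_gt0 cardA; pose W := {v | v \notin A}.
have [g gP] := exists_equipartition W d_gt0.
pose f v := if insub v is Some w then lift ord0 (g w : 'I_d) else ord0.
have f0E : [set v | f v == ord0] = A.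
  apply/setP => v; rewrite inE /f; case: insubP => [w nAv _ | /negbNE ->].
    by rewrite eq_sym (negbTE (neq_lift _ _)); apply/esym/negbTE.
  by rewrite eqxx.
have fliftE j : [set v | f v == lift ord0 j] = val @: [set w : W | g w == j].
  apply/setP => v; rewrite inE /f; case: insubP => [w _ <- | Av].
    by rewrite mem_imset ?inE ?(inj_eq lift_inj) //; apply: val_inj.
  rewrite (negbTE (neq_lift _ _)); apply/esym/negP => /imsetP[w _ vw].
  by move: Av; rewrite vw (valP w).
exists f => [j|v Av]; last by move: Av; rewrite -f0E inE => /eqP.
case: (unliftP ord0 j) => [j' ->|->]; last by right; rewrite f0E.
rewrite fliftE card_imset; last exact: val_inj.
have cardW : #|[pred v | v \notin A]| = #|V| - #|A|.
  by rewrite -(cardsC A) addKn; apply: eq_card => v; rewrite !inE.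
by rewrite gP card_sig cardW cardA; apply: equipartition_rest_sizes.
Qed.

Lemma good_tuple_in_part (V : finType) r (f : V -> 'I_r)
    (t : {ffun 'I_r -> {set V}}) j :
  {in \bigcup_i t i, forall v, f v = j} -> good_tuple f t.
Proof.
move=> tj; apply/forallP => i.
have tij v : v \in t i -> f v = j.
  by move=> vt; apply: tj; apply/bigcupP; exists i.
by apply/forall_inP => x xt; apply/forall_inP => y yt; rewrite !tij.
Qed.

Lemma ceil_divn_bounds n r : 0 < r -> 4 * r * r <= n ->
  let m := (n + r.-1) %/ r in [/\ 2 * r < m, m <= n & n <= 2 * r * (m - 2 * r)].
Proof.
move=> r_gt0 le_n /=.
have := divn_eq (n + r.-1) r; have := ltn_pmod (n + r.-1) r_gt0.
move: (_ %/ r) (_ %% r) => m p lt_p_r def_m; split; nia.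
Qed.

Theorem lemma2p5 :
  forall r : nat, 2 <= r ->
  exists c : rat, (0 < c)%R /\
  exists N : nat,
  forall (V : finType), N <= #|V| ->
  forall (E : {set {set V}}), simple_edges E ->
  forall (T : {set {ffun 'I_r -> {set V}}}),
    (forall t, t \in T -> forall i, t i \in E) ->
  exists f : V -> 'I_r,
    balanced_partition f /\
    (c * (#|T|)%:R <= (#|[set t in T | good_tuple f t]|)%:R)%R.
Proof.
case=> [|[|d]] // _; set r := d.+2; set D := (2 * r) ^ (2 * r).
have D_gt0 : 0 < D by rewrite expn_gt0.
exists (D%:R^-1)%R; split; first by rewrite invr_gt0 ltr0n.
exists (4 * r * r) => V Vlarge E Esimple T TE.
have [lt_2r_m m_le_V V_le] := ceil_divn_bounds (ltn0Sn d.+1) Vlarge.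
set m := (#|V| + _) %/ r in lt_2r_m m_le_V V_le.
pose S (t : {ffun 'I_r -> {set V}}) := \bigcup_(i < r) t i.
have cardS t : t \in T -> #|S t| <= 2 * r.
  move=> tT; apply: leq_trans (leq_card_bigcup _ _) _.
  rewrite (eq_bigr (fun=> 2)) => [|i _]; last exact/Esimple/TE.
  by rewrite sum_nat_const card_ord mulnC.
have [||A Am richA] := averaging_incidence (T := T) (D := D)
  (F := [set A : {set V} | #|A| == m]) (R := fun t A => S t \subset A).
- by rewrite card_draws bin_gt0.
- move=> t tT; rewrite card_draws.
  have -> : [set A in [set A : {set V} | #|A| == m] | S t \subset A] =
            [set A : {set V} | (#|A| == m) && (S t \subset A)].
    by apply/setP => A; rewrite !inE.
  apply: leq_trans
    (card_draws_leq_superset (S := S t) (m := m) (c := 2 * r) _ _) _.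
  + exact: leq_ltn_trans (cardS t tT) lt_2r_m.
  + by apply: leq_trans V_le _; rewrite leq_mul2l leq_sub2l ?cardS ?orbT.
  + by rewrite leq_mul2l leq_pexp2l ?cardS ?orbT.
have cardA : #|A| = (#|V| + d.+1) %/ d.+2 by move: Am; rewrite inE => /eqP.
have [f f_bal fA] := balanced_partition_with_part (ltn0Sn d) cardA.
exists f; split => //.
have good_ge :
    #|[set t in T | S t \subset A]| <= #|[set t in T | good_tuple f t]|.
  apply/subset_leq_card/subsetP => t; rewrite !inE => /andP[-> StA] /=.
  by apply: (good_tuple_in_part (j := ord0)) => v /(subsetP StA); apply: fA.
rewrite mulrC ler_pdivrMr ?ltr0n // -natrM ler_nat.
by apply: leq_trans richA _; rewrite leq_mul2r good_ge orbT.
Qed.
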